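(* Let $X$ be a separable real Banach space, $a\in\mathbb{R}$, and $\varphi:X\to[a,\infty)$ a continuous convex function which is not constant on any line (i.e. there are no $x,v\in X$ with $v\ne0$ such that $t\mapsto\varphi(x+tv)$ is constant on $\mathbb{R}$). Then $\varphi$ is essentially directionally coercive: there exists $\xi\in X^*$ such that $\lim_{t\to\infty}\big(\varphi(x+tv)-\langle\xi,x+tv\rangle\big)=\infty$ for every $x\in X$ and every $v\in X\setminus\{0\}$. *)

From Stdlib Require Import Reals.
Open Scope R_scope.

Record BanachSpace : Type := {
  bs_carrier :> Type;
  bs_zero : bs_carrier;
  bs_add : bs_carrier -> bs_carrier -> bs_carrier;
  bs_opp : bs_carrier -> bs_carrier;
  bs_scal : R -> bs_carrier -> bs_carrier;
  bs_norm : bs_carrier -> R;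
  bs_addA : forall x y z, bs_add x (bs_add y z) = bs_add (bs_add x y) z;
  bs_addC : forall x y, bs_add x y = bs_add y x;
  bs_add0 : forall x, bs_add x bs_zero = x;
  bs_addN : forall x, bs_add x (bs_opp x) = bs_zero;
  bs_scal1 : forall x, bs_scal 1 x = x;
  bs_scalA : forall a b x, bs_scal a (bs_scal b x) = bs_scal (a * b) x;
  bs_scalDr : forall a x y, bs_scal a (bs_add x y) = bs_add (bs_scal a x) (bs_scal a y);
  bs_scalDl : forall a b x, bs_scal (a + b) x = bs_add (bs_scal a x) (bs_scal b x);
  bs_norm_eq0 : forall x, bs_norm x = 0 -> x = bs_zero;
  bs_normZ : forall a x, bs_norm (bs_scal a x) = Rabs a * bs_norm x;
  bs_normD : forall x y, bs_norm (bs_add x y) <= bs_norm x + bs_norm y;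
  bs_complete : forall u : nat -> bs_carrier,
    (forall eps, eps > 0 -> exists N, forall m n, (m >= N)%nat -> (n >= N)%nat ->
        bs_norm (bs_add (u m) (bs_opp (u n))) < eps) ->
    exists l, forall eps, eps > 0 -> exists N, forall n, (n >= N)%nat ->
        bs_norm (bs_add (u n) (bs_opp l)) < eps
}.

Arguments bs_zero {_}.
Arguments bs_add {_} _ _.
Arguments bs_opp {_} _.
Arguments bs_scal {_} _ _.
Arguments bs_norm {_} _.

Definition bs_sub {X : BanachSpace} (x y : X) : X := bs_add x (bs_opp y).

Definition separable (X : BanachSpace) : Prop :=
  exists d : nat -> X, forall (x : X) eps, eps > 0 ->
    exists n, bs_norm (bs_sub x (d n)) < eps.

Definition continuous_on_X {X : BanachSpace} (f : X -> R) : Prop :=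
  forall (x : X) eps, eps > 0 -> exists delta, delta > 0 /\
    forall y : X, bs_norm (bs_sub y x) < delta -> Rabs (f y - f x) < eps.

Definition convex_fun {X : BanachSpace} (f : X -> R) : Prop :=
  forall (x y : X) t, 0 <= t <= 1 ->
    f (bs_add (bs_scal t x) (bs_scal (1 - t) y)) <= t * f x + (1 - t) * f y.

Definition not_constant_on_lines {X : BanachSpace} (f : X -> R) : Prop :=
  ~ exists (x v : X), v <> bs_zero /\
      forall t s : R, f (bs_add x (bs_scal t v)) = f (bs_add x (bs_scal s v)).

Definition in_dual {X : BanachSpace} (xi : X -> R) : Prop :=
  (forall x y : X, xi (bs_add x y) = xi x + xi y) /\
  (forall (a : R) (x : X), xi (bs_scal a x) = a * xi x) /\
  continuous_on_X xi.

Definition tends_to_infty (g : R -> R) : Prop :=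
  forall M : R, exists T : R, forall t, t >= T -> g t > M.

Definition essentially_directionally_coercive {X : BanachSpace} (f : X -> R) : Prop :=
  exists xi : X -> R, in_dual xi /\
    forall x v : X, v <> bs_zero ->
      tends_to_infty (fun t => f (bs_add x (bs_scal t v)) - xi (bs_add x (bs_scal t v))).

(* Choose a subgradient f_m of phi at every point d_m of a dense sequence (Hahn-Banach, obtained
   in a separable space by countably many one-dimensional extension steps) and let xi be an
   average of the f_m with strictly positive weights. If phi - xi stayed bounded along a ray
   x + t v, convexity would make it nonincreasing there, so s = xi v is a recession slope:
   phi (y + t v) <= phi y + t s for all y and t >= 0. Then f_m v <= s for every m, and since
   xi v = s is a strictly positive average of these values, f_m v = s. Hence phi is affine with
   slope s on every ray from d_m, by density on every line of direction v, and being bounded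
   below it has slope 0: phi is constant on a line. *)

From Stdlib Require Import Reals Lra Lia List ClassicalEpsilon Classical.
From Coquelicot Require Import Coquelicot.
Open Scope R_scope.

Section VectorAlgebra.
Context {X : BanachSpace}.

Lemma bs_add0l (x : X) : bs_add bs_zero x = x.
Proof. rewrite bs_addC; apply bs_add0. Qed.

Lemma bs_scal0l (x : X) : bs_scal 0 x = bs_zero.
Proof.
  assert (H : bs_scal 0 x = bs_add (bs_scal 0 x) (bs_scal 0 x)).
  { rewrite <- bs_scalDl. f_equal. ring. }
  transitivity (bs_add (bs_scal 0 x) (bs_add (bs_scal 0 x) (bs_opp (bs_scal 0 x)))).
  - rewrite bs_addN, bs_add0; auto.
  - rewrite bs_addA, <- H, bs_addN; auto.
Qed.

Lemma bs_scal0r (a : R) : bs_scal a (@bs_zero X) = bs_zero.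
Proof. rewrite <- (bs_scal0l bs_zero), bs_scalA, Rmult_0_r. reflexivity. Qed.

Lemma bs_oppE (x : X) : bs_opp x = bs_scal (-1) x.
Proof.
  assert (H : bs_add (bs_scal (-1) x) x = bs_zero).
  { rewrite <- (bs_scal1 _ x) at 2. rewrite <- bs_scalDl.
    replace (-1 + 1) with 0 by ring. apply bs_scal0l. }
  rewrite <- (bs_add0l (bs_opp x)), <- H, <- bs_addA, bs_addN, bs_add0. reflexivity.
Qed.

End VectorAlgebra.

(* Reflexive normalisation of vector identities: [vec env] reads both sides as linear
   combinations of the atoms listed in [env] and leaves one goal per coefficient, to be
   closed by [ring] or [field]. *)

Inductive vexp : Type :=
  | VAtom (n : nat) | VZero | VAdd (a b : vexp) | VScal (r : R) (a : vexp) | VOpp (a : vexp).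

Fixpoint vden {X : BanachSpace} (env : list X) (e : vexp) : X :=
  match e with
  | VAtom n => nth n env bs_zero
  | VZero => bs_zero
  | VAdd a b => bs_add (vden env a) (vden env b)
  | VScal r a => bs_scal r (vden env a)
  | VOpp a => bs_opp (vden env a)
  end.

Fixpoint lincomb {X : BanachSpace} (env : list X) (c : nat -> R) : X :=
  match env with
  | nil => bs_zero
  | a :: l => bs_add (bs_scal (c O) a) (lincomb l (fun k => c (S k)))
  end.

Fixpoint coef (e : vexp) (k : nat) : R :=
  match e with
  | VAtom n => if Nat.eqb n k then 1 else 0
  | VZero => 0
  | VAdd a b => coef a k + coef b k
  | VScal r a => r * coef a k
  | VOpp a => - coef a k
  end.

Section LinearCombinations.
Context {X : BanachSpace}.

Lemma lincomb_ext (env : list X) c1 c2 :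
  (forall k, c1 k = c2 k) -> lincomb env c1 = lincomb env c2.
Proof.
  revert c1 c2; induction env as [|a l IH]; intros c1 c2 H; simpl; auto.
  rewrite H. f_equal. apply IH. intros; apply H.
Qed.

Lemma bs_addACA (a b c d : X) :
  bs_add (bs_add a b) (bs_add c d) = bs_add (bs_add a c) (bs_add b d).
Proof. rewrite <- !bs_addA. f_equal. rewrite !bs_addA. f_equal. apply bs_addC. Qed.

Lemma lincombD (env : list X) c1 c2 :
  lincomb env (fun k => c1 k + c2 k) = bs_add (lincomb env c1) (lincomb env c2).
Proof.
  revert c1 c2; induction env as [|a l IH]; intros c1 c2; simpl.
  - rewrite bs_add0; auto.
  - rewrite bs_scalDl, IH. apply bs_addACA.
Qed.

Lemma lincombZ (env : list X) r c :
  lincomb env (fun k => r * c k) = bs_scal r (lincomb env c).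
Proof.
  revert c; induction env as [|a l IH]; intros c; simpl.
  - rewrite bs_scal0r; auto.
  - rewrite bs_scalDr, IH, bs_scalA. reflexivity.
Qed.

Lemma lincomb0 (env : list X) : lincomb env (fun _ => 0) = bs_zero.
Proof.
  induction env as [|a l IH]; simpl; auto. rewrite IH, bs_scal0l, bs_add0; auto.
Qed.

Lemma lincomb_atom (env : list X) n :
  lincomb env (fun k => if Nat.eqb n k then 1 else 0) = nth n env bs_zero.
Proof.
  revert n; induction env as [|a l IH]; intros n; simpl.
  - destruct n; auto.
  - destruct n as [|n]; simpl.
    + rewrite bs_scal1, lincomb0, bs_add0; auto.
    + rewrite bs_scal0l, bs_add0l. apply IH.
Qed.

Lemma vden_lincomb (env : list X) e : vden env e = lincomb env (coef e).
Proof.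
  induction e; simpl.
  - symmetry; apply lincomb_atom.
  - symmetry; apply lincomb0.
  - rewrite IHe1, IHe2, <- lincombD; auto.
  - rewrite IHe, <- lincombZ; auto.
  - rewrite IHe, bs_oppE, <- lincombZ. apply lincomb_ext. intros; ring.
Qed.

Lemma vden_eq (env : list X) e1 e2 :
  lincomb env (coef e1) = lincomb env (coef e2) -> vden env e1 = vden env e2.
Proof. rewrite !vden_lincomb; auto. Qed.

End LinearCombinations.

Ltac vlookup t env :=
  match env with
  | t :: _ => constr:(O)
  | _ :: ?r => let n := vlookup t r in constr:(S n)
  end.

Ltac vreify env t :=
  match t with
  | bs_add ?a ?b => let ea := vreify env a in let eb := vreify env b in constr:(VAdd ea eb)
  | bs_sub ?a ?b => let ea := vreify env a in let eb := vreify env b in constr:(VAdd ea (VOpp eb))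
  | bs_scal ?r ?a => let ea := vreify env a in constr:(VScal r ea)
  | bs_opp ?a => let ea := vreify env a in constr:(VOpp ea)
  | bs_zero => constr:(VZero)
  | _ => let n := vlookup t env in constr:(VAtom n)
  end.

Ltac vec env :=
  match goal with
  | |- ?L = ?Rr =>
    let e1 := vreify env L in let e2 := vreify env Rr in
    change (vden env e1 = vden env e2); apply vden_eq;
    cbn [lincomb coef Nat.eqb];
    repeat (match goal with
      | |- bs_add _ _ = bs_add _ _ => apply f_equal2
      | |- bs_scal _ _ = bs_scal _ _ => apply f_equal2; [|reflexivity]
      | |- bs_zero = bs_zero => reflexivity end)
  end.

Section Norm.
Context {X : BanachSpace}.

Lemma bs_norm0 : bs_norm (@bs_zero X) = 0.
Proof. rewrite <- (bs_scal0l (@bs_zero X)), bs_normZ, Rabs_R0; ring. Qed.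

Lemma bs_normN (x : X) : bs_norm (bs_scal (-1) x) = bs_norm x.
Proof. rewrite bs_normZ, Rabs_left by lra; ring. Qed.

Lemma bs_norm_ge0 (x : X) : 0 <= bs_norm x.
Proof.
  assert (H := bs_normD _ x (bs_scal (-1) x)).
  replace (bs_add x (bs_scal (-1) x)) with (@bs_zero X) in H by (vec (x :: nil); ring).
  rewrite bs_norm0, bs_normN in H. lra.
Qed.

Lemma bs_norm_subC (a b : X) : bs_norm (bs_sub a b) = bs_norm (bs_sub b a).
Proof.
  replace (bs_sub a b) with (bs_scal (-1) (bs_sub b a)) by (vec (a :: b :: nil); ring).
  apply bs_normN.
Qed.

End Norm.

Definition is_infimum (P : R -> Prop) (m : R) :=
  (forall y, P y -> m <= y) /\ (forall m', (forall y, P y -> m' <= y) -> m' <= m).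

Definition infimum (P : R -> Prop) : R := epsilon (inhabits 0) (is_infimum P).

Lemma infimumP (P : R -> Prop) (lb : R) :
  (exists y, P y) -> (forall y, P y -> lb <= y) -> is_infimum P (infimum P).
Proof.
  intros [y0 Hy0] Hlb. unfold infimum. apply epsilon_spec.
  destruct (completeness (fun z => P (- z))) as [m [Hm1 Hm2]].
  - exists (- lb). intros z Hz. apply Hlb in Hz. lra.
  - exists (- y0). rewrite Ropp_involutive. auto.
  - exists (- m). split.
    + intros y Hy. assert (Hm := Hm1 (- y)). cbv beta in Hm. rewrite Ropp_involutive in Hm.
      apply Hm in Hy. lra.
    + intros m' Hm'. assert (- m' >= m).
      { apply Rle_ge, Hm2. intros z Hz. apply Hm' in Hz. lra. }
      lra.
Qed.

Lemma infimum_le (P : R -> Prop) (lb : R) y :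
  (forall y, P y -> lb <= y) -> P y -> infimum P <= y.
Proof. intros Hlb Hy. apply (proj1 (infimumP P lb (ex_intro _ y Hy) Hlb)). auto. Qed.

Lemma le_infimum (P : R -> Prop) (lb : R) m :
  (exists y, P y) -> (forall y, P y -> lb <= y) -> (forall y, P y -> m <= y) -> m <= infimum P.
Proof. intros Hne Hlb Hm. apply (proj2 (infimumP P lb Hne Hlb)). auto. Qed.
(** * Hahn-Banach in separable spaces *)

Section HahnBanach.
Context {X : BanachSpace}.

Definition sublinear (p : X -> R) : Prop :=
  p bs_zero = 0 /\
  (forall u w, p (bs_add u w) <= p u + p w) /\
  (forall l w, l > 0 -> p (bs_scal l w) = l * p w).

Definition linear_functional (xi : X -> R) : Prop :=
  (forall u w, xi (bs_add u w) = xi u + xi w) /\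
  (forall a w, xi (bs_scal a w) = a * xi w).

Lemma pos_homogeneous_of_ge (f : X -> R) :
  (forall l w, l > 0 -> l * f w <= f (bs_scal l w)) ->
  forall l w, l > 0 -> f (bs_scal l w) = l * f w.
Proof.
  intros H l w Hl. apply Rle_antisym; [|auto].
  assert (Hl' : / l > 0) by (apply Rinv_0_lt_compat; lra).
  pose proof (H (/ l) (bs_scal l w) Hl') as Hinv.
  rewrite bs_scalA, Rinv_l, bs_scal1 in Hinv by lra.
  apply (Rmult_le_compat_l l) in Hinv; [|lra].
  rewrite <- Rmult_assoc, Rinv_r, Rmult_1_l in Hinv by lra. exact Hinv.
Qed.

Lemma sublinear_scal_ge0 (p : X -> R) l w :
  sublinear p -> l >= 0 -> p (bs_scal l w) = l * p w.
Proof.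
  intros [H0 [_ H2]] Hl. destruct (Rle_lt_or_eq_dec 0 l) as [Hl'|Hl']; try lra.
  - apply H2; lra.
  - subst. rewrite bs_scal0l, H0. ring.
Qed.

Lemma sublinear_addN_ge0 (p : X -> R) w :
  sublinear p -> 0 <= p w + p (bs_scal (-1) w).
Proof.
  intros [H0 [H1 _]].
  rewrite <- H0. replace (@bs_zero X) with (bs_add w (bs_scal (-1) w)) by (vec (w :: nil); ring).
  apply H1.
Qed.

(* One step of the Hahn-Banach extension: lower [p] along the line through [e]. *)
Definition ext_step (p : X -> R) (e w : X) : R :=
  infimum (fun r => exists t, r = p (bs_add w (bs_scal (- t) e)) + t * p e).

Section ExtStep.
Variables (p : X -> R) (e : X).
Hypothesis p_sublinear : sublinear p.

Lemma ext_step_values_lb w t :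
  - p (bs_scal (-1) w) <= p (bs_add w (bs_scal (- t) e)) + t * p e.
Proof.
  pose proof p_sublinear as [_ [Hadd _]].
  destruct (Rle_or_lt 0 t) as [Ht|Ht].
  - assert (A := Hadd (bs_add w (bs_scal (- t) e)) (bs_scal t e)).
    replace (bs_add (bs_add w (bs_scal (- t) e)) (bs_scal t e)) with w in A
      by (vec (w :: e :: nil); ring).
    rewrite (sublinear_scal_ge0 p t e p_sublinear) in A by lra.
    pose proof (sublinear_addN_ge0 p w p_sublinear). lra.
  - assert (A := Hadd (bs_scal (-1) w) (bs_add w (bs_scal (- t) e))).
    replace (bs_add (bs_scal (-1) w) (bs_add w (bs_scal (- t) e))) with (bs_scal (- t) e) in A
      by (vec (w :: e :: nil); ring).
    rewrite (sublinear_scal_ge0 p (- t) e p_sublinear) in A by lra. lra.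
Qed.

Lemma ext_step_le w t : ext_step p e w <= p (bs_add w (bs_scal (- t) e)) + t * p e.
Proof.
  apply (infimum_le _ (- p (bs_scal (-1) w))).
  - intros r [t' ->]. apply ext_step_values_lb.
  - exists t; auto.
Qed.

Lemma le_ext_step w m :
  (forall t, m <= p (bs_add w (bs_scal (- t) e)) + t * p e) -> m <= ext_step p e w.
Proof.
  intros Hm. apply (le_infimum _ (- p (bs_scal (-1) w))).
  - exists (p (bs_add w (bs_scal (- 0) e)) + 0 * p e), 0; auto.
  - intros r [t ->]. apply ext_step_values_lb.
  - intros r [t ->]. auto.
Qed.

Lemma ext_step_ge w : - p (bs_scal (-1) w) <= ext_step p e w.
Proof. apply le_ext_step. apply ext_step_values_lb. Qed.

Lemma ext_step_le_self w : ext_step p e w <= p w.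
Proof.
  eapply Rle_trans. apply (ext_step_le w 0).
  replace (bs_add w (bs_scal (- 0) e)) with w by (vec (w :: e :: nil); ring). lra.
Qed.

Lemma ext_step_addN : ext_step p e e + ext_step p e (bs_scal (-1) e) <= 0.
Proof.
  pose proof (ext_step_le e 1) as A. pose proof (ext_step_le (bs_scal (-1) e) (-1)) as B.
  replace (bs_add e (bs_scal (- (1)) e)) with (@bs_zero X) in A by (vec (e :: nil); ring).
  replace (bs_add (bs_scal (-1) e) (bs_scal (- -1) e)) with (@bs_zero X) in B
    by (vec (e :: nil); ring).
  destruct p_sublinear as [H0 _]. rewrite H0 in A, B. lra.
Qed.

Lemma ext_step_subadd u w :
  ext_step p e (bs_add u w) <= ext_step p e u + ext_step p e w.
Proof.
  pose proof p_sublinear as [_ [Hadd _]].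
  assert (Hu : forall t2, ext_step p e (bs_add u w)
                 - (p (bs_add w (bs_scal (- t2) e)) + t2 * p e) <= ext_step p e u).
  { intros t2. apply le_ext_step. intros t1.
    assert (A := ext_step_le (bs_add u w) (t1 + t2)).
    assert (B := Hadd (bs_add u (bs_scal (- t1) e)) (bs_add w (bs_scal (- t2) e))).
    replace (bs_add (bs_add u (bs_scal (- t1) e)) (bs_add w (bs_scal (- t2) e)))
      with (bs_add (bs_add u w) (bs_scal (- (t1 + t2)) e)) in B
      by (vec (u :: w :: e :: nil); ring).
    lra. }
  assert (ext_step p e (bs_add u w) - ext_step p e u <= ext_step p e w).
  { apply le_ext_step. intros t2. specialize (Hu t2). lra. }
  lra.
Qed.

Lemma sublinear_ext_step : sublinear (ext_step p e).
Proof.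
  pose proof p_sublinear as [H0 [_ Hhom]]. split; [|split].
  - apply Rle_antisym.
    + rewrite <- H0. apply ext_step_le_self.
    + eapply Rle_trans; [|apply ext_step_ge]. rewrite bs_scal0r, H0. lra.
  - apply ext_step_subadd.
  - apply pos_homogeneous_of_ge. intros l w Hl. apply le_ext_step. intros t.
    assert (A := ext_step_le w (t / l)).
    replace (bs_add (bs_scal l w) (bs_scal (- t) e))
      with (bs_scal l (bs_add w (bs_scal (- (t / l)) e))) by (vec (w :: e :: nil); field; lra).
    rewrite Hhom by auto.
    apply (Rmult_le_compat_l l) in A; [|lra].
    replace (l * (p (bs_add w (bs_scal (- (t / l)) e)) + t / l * p e))
      with (l * p (bs_add w (bs_scal (- (t / l)) e)) + t * p e) in A by (field; lra).
    lra.
Qed.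

End ExtStep.

Fixpoint hb_iter (p : X -> R) (d : nat -> X) (n : nat) : X -> R :=
  match n with O => p | S n => ext_step (hb_iter p d n) (d n) end.

Definition hb_inf (p : X -> R) (d : nat -> X) (w : X) : R :=
  infimum (fun r => exists n, r = hb_iter p d n w).

Section Iteration.
Variables (p : X -> R) (d : nat -> X).
Hypothesis p_sublinear : sublinear p.

Lemma sublinear_hb_iter n : sublinear (hb_iter p d n).
Proof. induction n; simpl; auto. apply sublinear_ext_step; auto. Qed.

Lemma hb_iter_antitone n m w : (n <= m)%nat -> hb_iter p d m w <= hb_iter p d n w.
Proof.
  intros Hnm. induction Hnm; [lra|]. simpl. eapply Rle_trans; [|apply IHHnm].
  apply ext_step_le_self, sublinear_hb_iter.
Qed.

Lemma hb_iter_ge n w : - p (bs_scal (-1) w) <= hb_iter p d n w.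
Proof.
  destruct n as [|n]; simpl.
  - pose proof (sublinear_addN_ge0 p w p_sublinear). lra.
  - eapply Rle_trans; [|apply ext_step_ge, sublinear_hb_iter].
    pose proof (hb_iter_antitone 0 n (bs_scal (-1) w) ltac:(lia)). simpl in H. lra.
Qed.

Lemma hb_iter_addN n k :
  (S k <= n)%nat -> hb_iter p d n (d k) + hb_iter p d n (bs_scal (-1) (d k)) = 0.
Proof.
  intros Hn. apply Rle_antisym.
  - pose proof (hb_iter_antitone (S k) n (d k) Hn).
    pose proof (hb_iter_antitone (S k) n (bs_scal (-1) (d k)) Hn).
    pose proof (ext_step_addN (hb_iter p d k) (d k) (sublinear_hb_iter k)). simpl in *. lra.
  - apply sublinear_addN_ge0, sublinear_hb_iter.
Qed.

Lemma hb_inf_le w n : hb_inf p d w <= hb_iter p d n w.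
Proof.
  apply (infimum_le _ (- p (bs_scal (-1) w))).
  - intros y [m ->]. apply hb_iter_ge.
  - exists n; auto.
Qed.

Lemma le_hb_inf w m : (forall n, m <= hb_iter p d n w) -> m <= hb_inf p d w.
Proof.
  intros H. apply (le_infimum _ (- p (bs_scal (-1) w))).
  - exists (hb_iter p d 0 w), 0%nat; auto.
  - intros y [k ->]. apply hb_iter_ge.
  - intros y [k ->]. auto.
Qed.

Lemma hb_inf_subadd u w : hb_inf p d (bs_add u w) <= hb_inf p d u + hb_inf p d w.
Proof.
  assert (Hu : forall n1, hb_inf p d (bs_add u w) - hb_iter p d n1 u <= hb_inf p d w).
  { intros n1. apply le_hb_inf. intros n2.
    pose proof (hb_inf_le (bs_add u w) (max n1 n2)).
    destruct (sublinear_hb_iter (max n1 n2)) as [_ [Hadd _]].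
    pose proof (Hadd u w).
    pose proof (hb_iter_antitone n1 (max n1 n2) u ltac:(lia)).
    pose proof (hb_iter_antitone n2 (max n1 n2) w ltac:(lia)). lra. }
  assert (hb_inf p d (bs_add u w) - hb_inf p d w <= hb_inf p d u).
  { apply le_hb_inf. intros n. specialize (Hu n). lra. }
  lra.
Qed.

Lemma hb_inf0 : hb_inf p d bs_zero = 0.
Proof.
  apply Rle_antisym.
  - pose proof (hb_inf_le bs_zero 0). destruct p_sublinear as [H0 _]. simpl in H. lra.
  - apply le_hb_inf. intros n. destruct (sublinear_hb_iter n) as [H0 _]. lra.
Qed.

Lemma hb_inf_addN_ge0 w : 0 <= hb_inf p d w + hb_inf p d (bs_scal (-1) w).
Proof.
  rewrite <- hb_inf0.
  replace (@bs_zero X) with (bs_add w (bs_scal (-1) w)) at 1 by (vec (w :: nil); ring).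
  apply hb_inf_subadd.
Qed.

Lemma hb_inf_scal_pos l w : l > 0 -> hb_inf p d (bs_scal l w) = l * hb_inf p d w.
Proof.
  revert l w. apply pos_homogeneous_of_ge. intros l w Hl. apply le_hb_inf. intros n.
  pose proof (hb_inf_le w n). destruct (sublinear_hb_iter n) as [_ [_ Hhom]].
  rewrite Hhom by auto. apply Rmult_le_compat_l; lra.
Qed.

Lemma hb_inf_addN_dense k : hb_inf p d (d k) + hb_inf p d (bs_scal (-1) (d k)) = 0.
Proof.
  apply Rle_antisym; [|apply hb_inf_addN_ge0].
  pose proof (hb_inf_le (d k) (S k)).
  pose proof (hb_inf_le (bs_scal (-1) (d k)) (S k)).
  pose proof (hb_iter_addN (S k) k ltac:(lia)). lra.
Qed.

Lemma hb_inf_sub_le L u w :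
  (forall z, p z <= L * bs_norm z) -> hb_inf p d u - hb_inf p d w <= L * bs_norm (bs_sub u w).
Proof.
  intros HL. pose proof (hb_inf_subadd w (bs_sub u w)).
  replace (bs_add w (bs_sub u w)) with u in H by (vec (u :: w :: nil); ring).
  pose proof (hb_inf_le (bs_sub u w) 0). simpl in H0. pose proof (HL (bs_sub u w)). lra.
Qed.

(* Oddness passes from the dense set to all of [X] because [hb_inf] is [L]-Lipschitz. *)
Lemma hb_inf_addN (L : R) :
  (forall (x : X) eps, eps > 0 -> exists n, bs_norm (bs_sub x (d n)) < eps) ->
  0 <= L -> (forall w, p w <= L * bs_norm w) ->
  forall w, hb_inf p d w + hb_inf p d (bs_scal (-1) w) = 0.
Proof.
  intros Hd HL0 HL w. apply Rle_antisym; [|apply hb_inf_addN_ge0].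
  apply Rnot_lt_le. intros Hg.
  set (g := hb_inf p d w + hb_inf p d (bs_scal (-1) w)) in *.
  destruct (Hd w (g / (2 * L + 1))) as [k Hk]; [apply Rdiv_lt_0_compat; lra|].
  pose proof (hb_inf_sub_le L w (d k) HL).
  pose proof (hb_inf_sub_le L (bs_scal (-1) w) (bs_scal (-1) (d k)) HL).
  replace (bs_sub (bs_scal (-1) w) (bs_scal (-1) (d k))) with (bs_scal (-1) (bs_sub w (d k))) in H0
    by (vec (w :: d k :: nil); ring).
  rewrite bs_normN in H0. pose proof (hb_inf_addN_dense k).
  assert (2 * L * bs_norm (bs_sub w (d k)) <= 2 * L * (g / (2 * L + 1)))
    by (apply Rmult_le_compat_l; lra).
  assert (2 * L * (g / (2 * L + 1)) < g).
  { apply (Rmult_lt_reg_r (2 * L + 1)); [lra|].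
    replace (2 * L * (g / (2 * L + 1)) * (2 * L + 1)) with (2 * L * g) by (field; lra). nra. }
  unfold g in *. lra.
Qed.

End Iteration.

Theorem hahn_banach_separable (d : nat -> X) (p : X -> R) (L : R) :
  (forall (x : X) eps, eps > 0 -> exists n, bs_norm (bs_sub x (d n)) < eps) ->
  sublinear p -> 0 <= L -> (forall w, p w <= L * bs_norm w) ->
  exists xi : X -> R, linear_functional xi /\ forall w, xi w <= p w.
Proof.
  intros Hd Hp HL0 HL. exists (hb_inf p d).
  pose proof (hb_inf_addN p d Hp L Hd HL0 HL) as Hodd.
  split; [split|].
  - intros u w. apply Rle_antisym; [apply hb_inf_subadd; auto|].
    pose proof (hb_inf_subadd p d Hp (bs_scal (-1) u) (bs_scal (-1) w)).
    replace (bs_add (bs_scal (-1) u) (bs_scal (-1) w)) with (bs_scal (-1) (bs_add u w)) in H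
      by (vec (u :: w :: nil); ring).
    pose proof (Hodd u). pose proof (Hodd w). pose proof (Hodd (bs_add u w)). lra.
  - intros a w. destruct (Rtotal_order a 0) as [Ha|[Ha|Ha]].
    + replace (bs_scal a w) with (bs_scal (-1) (bs_scal (- a) w)) by (vec (w :: nil); ring).
      pose proof (Hodd (bs_scal (- a) w)). rewrite hb_inf_scal_pos in * by (auto; lra). lra.
    + subst. rewrite bs_scal0l, hb_inf0; auto. ring.
    + apply hb_inf_scal_pos; auto.
  - intros w. apply (hb_inf_le p d Hp w 0).
Qed.

End HahnBanach.
(** * Subgradients *)

Section Subgradients.
Context {X : BanachSpace}.

Definition bounded_linear (xi : X -> R) : Prop :=
  linear_functional xi /\ exists L, 0 <= L /\ forall w, Rabs (xi w) <= L * bs_norm w.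

Definition subgradient (phi : X -> R) (y : X) (xi : X -> R) : Prop :=
  forall w, phi y + xi w <= phi (bs_add y w).

Lemma in_dual_bounded_linear (xi : X -> R) : bounded_linear xi -> in_dual xi.
Proof.
  intros [[Hadd Hhom] [L [HL0 HL]]]. split; [|split]; auto.
  intros x eps Heps. exists (eps / (L + 1)). split; [apply Rdiv_lt_0_compat; lra|].
  intros y Hy. unfold bs_sub in Hy. rewrite bs_oppE in Hy.
  pose proof (HL (bs_add y (bs_scal (-1) x))) as Hb. rewrite Hadd, Hhom in Hb.
  replace (xi y - xi x) with (xi y + -1 * xi x) by ring.
  pose proof (bs_norm_ge0 (bs_add y (bs_scal (-1) x))).
  apply (Rmult_lt_compat_l (L + 1)) in Hy; [|lra].
  replace ((L + 1) * (eps / (L + 1))) with eps in Hy by (field; lra). nra.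
Qed.

Section DirectionalDerivative.
Variable phi : X -> R.
Hypothesis phi_convex : convex_fun phi.

Definition diff_quot (y w : X) (t : R) : R := (phi (bs_add y (bs_scal t w)) - phi y) / t.

Lemma diff_quot_ge y w t : t > 0 -> phi y - phi (bs_add y (bs_scal (-1) w)) <= diff_quot y w t.
Proof.
  intros Ht. set (l := / (1 + t)).
  assert (Hl : 0 < l < 1).
  { unfold l. split; [apply Rinv_0_lt_compat; lra|].
    rewrite <- Rinv_1. apply Rinv_lt_contravar; lra. }
  pose proof (phi_convex (bs_add y (bs_scal t w)) (bs_add y (bs_scal (-1) w)) l ltac:(lra)) as H.
  replace (bs_add (bs_scal l (bs_add y (bs_scal t w))) (bs_scal (1 - l) (bs_add y (bs_scal (-1) w))))
    with y in H by (vec (y :: w :: nil); unfold l; field; lra).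
  unfold diff_quot. apply (Rmult_le_reg_r t); auto. unfold Rdiv.
  rewrite Rmult_assoc, Rinv_l, Rmult_1_r by lra.
  apply (Rmult_le_reg_l l); [lra|].
  assert (E1 : l * (1 + t) = 1) by (unfold l; field; lra).
  assert (E2 : 1 - l = t * l) by lra.
  rewrite E2 in H.
  set (A := phi y) in *. set (B := phi (bs_add y (bs_scal (-1) w))) in *.
  set (C := phi (bs_add y (bs_scal t w))) in *.
  assert (E3 : l * ((A - B) * t) - l * (C - A) = A * (l * (1 + t)) - (l * C + t * l * B)) by ring.
  rewrite E1 in E3. lra.
Qed.

Lemma diff_quot_mono y w s t : 0 < s -> s <= t -> diff_quot y w s <= diff_quot y w t.
Proof.
  intros Hs Hst.
  assert (Hst' : 0 <= s / t <= 1).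
  { split; [apply Rlt_le, Rdiv_lt_0_compat; lra|].
    apply (Rmult_le_reg_l t); [lra|]. unfold Rdiv.
    rewrite Rmult_1_r, <- Rmult_assoc, Rinv_r_simpl_m; lra. }
  pose proof (phi_convex (bs_add y (bs_scal t w)) y (s / t) Hst') as H.
  replace (bs_add (bs_scal (s / t) (bs_add y (bs_scal t w))) (bs_scal (1 - s / t) y))
    with (bs_add y (bs_scal s w)) in H by (vec (y :: w :: nil); field; lra).
  unfold diff_quot. apply (Rmult_le_reg_l s); auto.
  replace (s * ((phi (bs_add y (bs_scal s w)) - phi y) / s))
    with (phi (bs_add y (bs_scal s w)) - phi y) by (field; lra).
  replace (s * ((phi (bs_add y (bs_scal t w)) - phi y) / t))
    with (s / t * phi (bs_add y (bs_scal t w)) - s / t * phi y) by (field; lra).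
  lra.
Qed.

Definition dir_deriv (y w : X) : R :=
  infimum (fun r => exists t, t > 0 /\ r = diff_quot y w t).

Lemma dir_deriv_le y w t : t > 0 -> dir_deriv y w <= diff_quot y w t.
Proof.
  intros Ht. apply (infimum_le _ (phi y - phi (bs_add y (bs_scal (-1) w)))).
  - intros r [s [Hs ->]]. apply diff_quot_ge; auto.
  - exists t; auto.
Qed.

Lemma le_dir_deriv y w m : (forall t, t > 0 -> m <= diff_quot y w t) -> m <= dir_deriv y w.
Proof.
  intros H. apply (le_infimum _ (phi y - phi (bs_add y (bs_scal (-1) w)))).
  - exists (diff_quot y w 1), 1; split; auto; lra.
  - intros r [s [Hs ->]]. apply diff_quot_ge; auto.
  - intros r [s [Hs ->]]. auto.
Qed.

Lemma diff_quot_subadd y u w t :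
  t > 0 -> diff_quot y (bs_add u w) t <= diff_quot y u (2 * t) + diff_quot y w (2 * t).
Proof.
  intros Ht.
  pose proof (phi_convex (bs_add y (bs_scal (2 * t) u)) (bs_add y (bs_scal (2 * t) w)) (1/2)
                ltac:(lra)) as H.
  replace (bs_add (bs_scal (1/2) (bs_add y (bs_scal (2 * t) u)))
             (bs_scal (1 - 1/2) (bs_add y (bs_scal (2 * t) w))))
    with (bs_add y (bs_scal t (bs_add u w))) in H by (vec (y :: u :: w :: nil); field).
  unfold diff_quot. apply (Rmult_le_reg_l (2 * t)); [lra|].
  replace (2 * t * ((phi (bs_add y (bs_scal t (bs_add u w))) - phi y) / t))
    with (2 * (phi (bs_add y (bs_scal t (bs_add u w))) - phi y)) by (field; lra).
  replace (2 * t * ((phi (bs_add y (bs_scal (2 * t) u)) - phi y) / (2 * t) +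
           (phi (bs_add y (bs_scal (2 * t) w)) - phi y) / (2 * t)))
    with (phi (bs_add y (bs_scal (2 * t) u)) - phi y + (phi (bs_add y (bs_scal (2 * t) w)) - phi y))
    by (field; lra).
  lra.
Qed.

Lemma dir_deriv_subadd y u w : dir_deriv y (bs_add u w) <= dir_deriv y u + dir_deriv y w.
Proof.
  assert (H : forall t1 t2, t1 > 0 -> t2 > 0 ->
            dir_deriv y (bs_add u w) <= diff_quot y u t1 + diff_quot y w t2).
  { intros t1 t2 H1 H2. set (tau := Rmin t1 t2 / 2).
    assert (Htau : 0 < tau) by (unfold tau; pose proof (Rmin_glb_lt t1 t2 0 H1 H2); lra).
    assert (tau <= t1 / 2) by (unfold tau; pose proof (Rmin_l t1 t2); lra).
    assert (tau <= t2 / 2) by (unfold tau; pose proof (Rmin_r t1 t2); lra).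
    pose proof (dir_deriv_le y (bs_add u w) tau Htau).
    pose proof (diff_quot_subadd y u w tau Htau).
    pose proof (diff_quot_mono y u (2 * tau) t1 ltac:(lra) ltac:(lra)).
    pose proof (diff_quot_mono y w (2 * tau) t2 ltac:(lra) ltac:(lra)).
    lra. }
  assert (H' : forall t2, t2 > 0 -> dir_deriv y (bs_add u w) - diff_quot y w t2 <= dir_deriv y u).
  { intros t2 H2. apply le_dir_deriv. intros t1 H1. specialize (H t1 t2 H1 H2). lra. }
  assert (dir_deriv y (bs_add u w) - dir_deriv y u <= dir_deriv y w).
  { apply le_dir_deriv. intros t2 H2. specialize (H' t2 H2). lra. }
  lra.
Qed.

Lemma sublinear_dir_deriv y : sublinear (dir_deriv y).
Proof.
  split; [|split].
  - assert (E : forall t, t > 0 -> diff_quot y bs_zero t = 0).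
    { intros t Ht. unfold diff_quot. rewrite bs_scal0r, bs_add0. field; lra. }
    apply Rle_antisym.
    + rewrite <- (E 1) by lra. apply dir_deriv_le; lra.
    + apply le_dir_deriv. intros t Ht. rewrite E; auto; lra.
  - apply dir_deriv_subadd.
  - apply pos_homogeneous_of_ge. intros l w Hl. apply le_dir_deriv. intros t Ht.
    replace (diff_quot y (bs_scal l w) t) with (l * diff_quot y w (t * l))
      by (unfold diff_quot; rewrite bs_scalA; field; lra).
    apply Rmult_le_compat_l; [lra|]. apply dir_deriv_le. nra.
Qed.

Lemma dir_deriv_bound y :
  continuous_on_X phi -> exists L, 0 <= L /\ forall w, dir_deriv y w <= L * bs_norm w.
Proof.
  intros Hcont. destruct (Hcont y 1 ltac:(lra)) as [delta [Hdel Hy]].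
  exists (2 / delta). split; [apply Rlt_le, Rdiv_lt_0_compat; lra|].
  intros w. destruct (Req_dec (bs_norm w) 0) as [E|E].
  - apply bs_norm_eq0 in E. subst w. destruct (sublinear_dir_deriv y) as [H0 _].
    rewrite H0, bs_norm0. lra.
  - pose proof (bs_norm_ge0 w). set (t := delta / (2 * bs_norm w)).
    assert (Ht : t > 0) by (unfold t; apply Rdiv_lt_0_compat; lra).
    eapply Rle_trans; [apply (dir_deriv_le _ _ t); auto|].
    assert (Hn : bs_norm (bs_sub (bs_add y (bs_scal t w)) y) < delta).
    { replace (bs_sub (bs_add y (bs_scal t w)) y) with (bs_scal t w) by (vec (y :: w :: nil); ring).
      rewrite bs_normZ, Rabs_right by lra. unfold t. field_simplify; lra. }
    apply Hy, Rabs_def2 in Hn. unfold diff_quot.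
    apply (Rmult_le_reg_l t); auto.
    replace (t * ((phi (bs_add y (bs_scal t w)) - phi y) / t))
      with (phi (bs_add y (bs_scal t w)) - phi y) by (field; lra).
    replace (t * (2 / delta * bs_norm w)) with 1 by (unfold t; field; lra). lra.
Qed.

End DirectionalDerivative.

(* A linear minorant of the directional derivative is a subgradient. *)
Theorem subgradient_exists (d : nat -> X) (phi : X -> R) (y : X) :
  (forall (x : X) eps, eps > 0 -> exists n, bs_norm (bs_sub x (d n)) < eps) ->
  convex_fun phi -> continuous_on_X phi ->
  exists xi : X -> R, bounded_linear xi /\ subgradient phi y xi.
Proof.
  intros Hd Hc Hcont. destruct (dir_deriv_bound phi Hc y Hcont) as [L [HL0 HL]].
  destruct (hahn_banach_separable d (dir_deriv phi y) L Hd (sublinear_dir_deriv phi Hc y) HL0 HL)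
    as [xi [[Hadd Hhom] Hle]].
  exists xi. split; [split; [split; auto|exists L; split; auto]|].
  - intros w. apply Rabs_le. split.
    + pose proof (Hle (bs_scal (-1) w)). pose proof (HL (bs_scal (-1) w)).
      rewrite Hhom, bs_normN in *. lra.
    + pose proof (Hle w). pose proof (HL w). lra.
  - intros w. pose proof (Hle w). pose proof (dir_deriv_le phi Hc y w 1 ltac:(lra)).
    unfold diff_quot in H0. rewrite bs_scal1, Rdiv_1_r in H0. lra.
Qed.

End Subgradients.
(** * Averages of bounded linear functionals *)

Lemma is_series_half_pow : is_series (fun n => (/2)^n) 2.
Proof.
  assert (H : Rabs (/2) < 1) by (rewrite Rabs_right; lra).
  pose proof (is_series_geom (/2) H) as Hgeom.
  replace (/ (1 - /2)) with 2 in Hgeom by field. exact Hgeom.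
Qed.

Lemma half_pow_pos n : 0 < (/2)^n.
Proof. apply pow_lt. lra. Qed.

Lemma ex_series_geom_half (C : R) : ex_series (fun n => (/2)^n * C).
Proof. apply ex_series_scal_r. exists 2. apply is_series_half_pow. Qed.

Section GeometricDomination.
Variables (a : nat -> R) (C : R).
Hypothesis a_le : forall n, Rabs (a n) <= (/2)^n * C.

Lemma ex_series_abs_half_pow_dom : ex_series (fun n => Rabs (a n)).
Proof.
  apply (ex_series_le (K := R_AbsRing) (V := R_CompleteNormedModule) _ (fun n => (/2)^n * C));
    [|apply ex_series_geom_half].
  intros n. change (norm (Rabs (a n))) with (Rabs (Rabs (a n))). rewrite Rabs_Rabsolu. auto.
Qed.

Lemma ex_series_half_pow_dom : ex_series a.
Proof. apply ex_series_Rabs, ex_series_abs_half_pow_dom. Qed.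

Lemma Series_half_pow_dom : Rabs (Series a) <= 2 * C.
Proof.
  eapply Rle_trans; [apply Series_Rabs, ex_series_abs_half_pow_dom|].
  replace (2 * C) with (Series (fun n => (/2)^n * C))
    by (rewrite Series_scal_r, (is_series_unique (pow (/2)) 2 is_series_half_pow); ring).
  apply Series_le; [|apply ex_series_geom_half].
  intros n; split; auto. apply Rabs_pos.
Qed.

End GeometricDomination.

Lemma Series_ge_term (b : nat -> R) m :
  (forall n, 0 <= b n) -> ex_series b -> b m <= Series b.
Proof.
  intros Hb Hex. rewrite (Series_incr_n b (S m)) by (auto; lia). simpl Init.Nat.pred.
  assert (b m <= sum_f_R0 b m).
  { destruct m; simpl; [lra|]. pose proof (cond_pos_sum b m Hb). lra. }
  assert (0 <= Series (fun k => b (S m + k)%nat)).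
  { rewrite <- (Rmult_0_l (Series (fun k => b (S m + k)%nat))), <- Series_scal_l.
    apply Series_le; [intros n; rewrite Rmult_0_l; split; [lra|auto]|].
    apply (ex_series_incr_n b (S m)) in Hex. auto. }
  lra.
Qed.

Lemma Series_nonneg_eq0 (b : nat -> R) :
  (forall n, 0 <= b n) -> ex_series b -> Series b = 0 -> forall n, b n = 0.
Proof.
  intros Hb Hex H0 n. pose proof (Series_ge_term b n Hb Hex). pose proof (Hb n). lra.
Qed.

Section WeightedSum.
Context {X : BanachSpace}.
Variables (f : nat -> X -> R) (c : nat -> R).
Hypotheses (f_linear : forall m, linear_functional (f m)) (c_pos : forall m, 0 < c m)
  (c_dom : forall m w, Rabs (c m * f m w) <= (/2)^m * bs_norm w).

Definition weighted_sum (w : X) : R := Series (fun m => c m * f m w).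

Lemma ex_series_weighted w : ex_series (fun m => c m * f m w).
Proof. exact (ex_series_half_pow_dom _ _ (fun m => c_dom m w)). Qed.

Lemma linear_weighted_sum : linear_functional weighted_sum.
Proof.
  unfold weighted_sum. split.
  - intros u w. rewrite <- Series_plus by apply ex_series_weighted.
    apply Series_ext. intros m. rewrite (proj1 (f_linear m)). ring.
  - intros a w. rewrite <- Series_scal_l.
    apply Series_ext. intros m. rewrite (proj2 (f_linear m)). ring.
Qed.

Lemma weighted_sum_bound w : Rabs (weighted_sum w) <= 2 * bs_norm w.
Proof. exact (Series_half_pow_dom _ _ (fun m => c_dom m w)). Qed.

Lemma weighted_sum_eq_bound v s :
  ex_series c -> (forall m, f m v <= s) -> weighted_sum v = s * Series c -> forall m, f m v = s.
Proof.
  intros Hexc Hle Hsum m.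
  set (b := fun n => c n * s - c n * f n v).
  assert (Hb0 : forall n, 0 <= b n).
  { intros n. unfold b. pose proof (c_pos n). pose proof (Hle n). nra. }
  assert (Hexb : ex_series b).
  { apply (ex_series_minus (V := R_NormedModule) (fun n => c n * s));
      [apply ex_series_scal_r; auto|apply ex_series_weighted]. }
  assert (Hb : Series b = 0).
  { unfold b. rewrite Series_minus; [|apply ex_series_scal_r; auto|apply ex_series_weighted].
    rewrite Series_scal_r. fold (weighted_sum v). lra. }
  pose proof (Series_nonneg_eq0 b Hb0 Hexb Hb m) as Hbm. unfold b in Hbm.
  pose proof (c_pos m). apply (Rmult_eq_reg_l (c m)); lra.
Qed.

End WeightedSum.

Section MeanFunctional.
Context {X : BanachSpace}.

(* [xi] is a normalised average of the [f m] with strictly positive weights. *)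
Lemma mean_functional (f : nat -> X -> R) :
  (forall m, bounded_linear (f m)) ->
  exists xi, bounded_linear xi /\
    forall v s, (forall m, f m v <= s) -> xi v = s -> forall m, f m v = s.
Proof.
  intros Hf.
  destruct (choice (fun m L => 0 <= L /\ forall w, Rabs (f m w) <= L * bs_norm w)) as [L HL].
  { intros m. apply (proj2 (Hf m)). }
  set (c := fun m => (/2)^m / (1 + L m)).
  assert (Hc : forall m, 0 < c m /\ c m <= (/2)^m /\ c m * L m <= (/2)^m).
  { intros m. destruct (HL m) as [HL0 _]. pose proof (half_pow_pos m). unfold c.
    repeat split.
    - apply Rdiv_lt_0_compat; lra.
    - apply (Rmult_le_reg_r (1 + L m)); [lra|]. field_simplify; nra.
    - apply (Rmult_le_reg_r (1 + L m)); [lra|]. field_simplify; nra. }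
  assert (Hdom : forall m w, Rabs (c m * f m w) <= (/2)^m * bs_norm w).
  { intros m w. destruct (Hc m) as [Hc0 [_ HcL]]. destruct (HL m) as [_ Hb].
    rewrite Rabs_mult, (Rabs_right (c m)) by lra.
    pose proof (Hb w). pose proof (bs_norm_ge0 w).
    apply Rle_trans with (c m * (L m * bs_norm w)); [apply Rmult_le_compat_l; lra|nra]. }
  assert (Hcpos : forall m, 0 < c m) by apply Hc.
  assert (Hexc : ex_series c).
  { apply (ex_series_half_pow_dom _ 1). intros m. destruct (Hc m) as [Hc0 [Hc1 _]].
    rewrite Rabs_right, Rmult_1_r; lra. }
  set (S := Series c).
  assert (HS : 0 < S).
  { pose proof (Series_ge_term c 0 (fun n => Rlt_le _ _ (Hcpos n)) Hexc).
    pose proof (Hcpos 0%nat). unfold S. lra. }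
  pose proof (linear_weighted_sum f c (fun m => proj1 (Hf m)) Hdom) as [Hadd Hhom].
  exists (fun w => weighted_sum f c w / S). split; [split; [split|]|].
  - intros u w. rewrite Hadd. field. lra.
  - intros a' w. rewrite Hhom. field. lra.
  - exists (2 / S). split; [apply Rlt_le, Rdiv_lt_0_compat; lra|]. intros w.
    pose proof (weighted_sum_bound f c Hdom w).
    unfold Rdiv. rewrite Rabs_mult, (Rabs_right (/ S)) by (apply Rle_ge, Rlt_le, Rinv_0_lt_compat; lra).
    apply (Rmult_le_compat_r (/ S)) in H; [|apply Rlt_le, Rinv_0_lt_compat; lra]. lra.
  - intros v s Hle Hmean. apply (weighted_sum_eq_bound f c Hcpos Hdom v s Hexc Hle).
    fold S. rewrite <- Hmean. field. lra.
Qed.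

End MeanFunctional.
(** * Recession slopes *)

Definition convex_real (h : R -> R) : Prop :=
  forall p q l, 0 <= l <= 1 -> h (l * p + (1 - l) * q) <= l * h p + (1 - l) * h q.

Lemma convex_real_chord (h : R -> R) a b t :
  convex_real h -> a < b -> b < t -> (t - a) * h b <= (t - b) * h a + (b - a) * h t.
Proof.
  intros Hc Hab Hbt. set (l := (t - b) / (t - a)).
  assert (Hl : 0 <= l <= 1).
  { unfold l. split; [apply Rmult_le_pos; [lra|apply Rlt_le, Rinv_0_lt_compat; lra]|].
    apply (Rmult_le_reg_r (t - a)); [lra|]. unfold Rdiv. rewrite Rmult_assoc, Rinv_l; lra. }
  pose proof (Hc a t l Hl) as H.
  replace (l * a + (1 - l) * t) with b in H by (unfold l; field; lra).
  replace (1 - l) with ((b - a) / (t - a)) in H by (unfold l; field; lra).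
  apply (Rmult_le_compat_l (t - a)) in H; [|lra].
  replace ((t - a) * (l * h a + (b - a) / (t - a) * h t)) with ((t - b) * h a + (b - a) * h t) in H
    by (unfold l; field; lra).
  exact H.
Qed.

Lemma convex_real_tends_to_infty (h : R -> R) a b :
  convex_real h -> a < b -> h a < h b -> tends_to_infty h.
Proof.
  intros Hc Hab Hh M. set (D := h b - h a). set (K := Rabs (M - h b) + 1).
  assert (HK : 0 < K) by (unfold K; pose proof (Rabs_pos (M - h b)); lra).
  assert (HD : 0 < D) by (unfold D; lra).
  assert (Hq : 0 < K * (b - a) / D) by (apply Rdiv_lt_0_compat; nra).
  exists (b + K * (b - a) / D). intros t Ht. apply Rge_le in Ht.
  assert (HT : K * (b - a) <= (t - b) * D).
  { apply (Rmult_le_compat_r D) in Ht; [|lra].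
    replace ((b + K * (b - a) / D) * D) with (b * D + K * (b - a)) in Ht by (field; lra).
    lra. }
  pose proof (convex_real_chord h a b t Hc Hab ltac:(lra)).
  assert (h b + K <= h t).
  { apply (Rmult_le_reg_l (b - a)); [lra|]. unfold D in HT. nra. }
  pose proof (Rle_abs (M - h b)). unfold K in *. lra.
Qed.

Section Recession.
Context {X : BanachSpace}.
Variable phi : X -> R.
Hypotheses (phi_convex : convex_fun phi) (phi_cont : continuous_on_X phi).

Lemma convex_real_line (xi : X -> R) x v :
  linear_functional xi ->
  convex_real (fun t => phi (bs_add x (bs_scal t v)) - xi (bs_add x (bs_scal t v))).
Proof.
  intros [Hadd Hhom] p q l Hl.
  pose proof (phi_convex (bs_add x (bs_scal p v)) (bs_add x (bs_scal q v)) l Hl) as H.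
  replace (bs_add (bs_scal l (bs_add x (bs_scal p v))) (bs_scal (1 - l) (bs_add x (bs_scal q v))))
    with (bs_add x (bs_scal (l * p + (1 - l) * q) v)) in H by (vec (x :: v :: nil); ring).
  rewrite !Hadd, !Hhom. lra.
Qed.

Lemma continuous_along (y z : X) eps :
  eps > 0 -> exists c0, c0 > 0 /\ forall c, 0 <= c <= c0 -> phi (bs_add y (bs_scal c z)) < phi y + eps.
Proof.
  intros Heps. destruct (phi_cont y eps Heps) as [delta [Hdel Hy]].
  pose proof (bs_norm_ge0 z).
  exists (delta / (1 + bs_norm z)). split; [apply Rdiv_lt_0_compat; lra|].
  intros c Hc.
  assert (Hn : bs_norm (bs_sub (bs_add y (bs_scal c z)) y) < delta).
  { replace (bs_sub (bs_add y (bs_scal c z)) y) with (bs_scal c z) by (vec (y :: z :: nil); ring).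
    rewrite bs_normZ, Rabs_right by lra.
    apply Rle_lt_trans with (delta / (1 + bs_norm z) * bs_norm z); [apply Rmult_le_compat_r; lra|].
    apply (Rmult_lt_reg_r (1 + bs_norm z)); [lra|].
    replace (delta / (1 + bs_norm z) * bs_norm z * (1 + bs_norm z)) with (delta * bs_norm z)
      by (field; lra). nra. }
  apply Hy, Rabs_def2 in Hn. lra.
Qed.

(* [y + t v] is a convex combination of a far point [x + (t/l) v] of the ray from [x] and of a
   point near [y]; letting [l] tend to 0 gives the recession inequality at [y]. *)
Lemma recession_chord x v y s t l :
  (forall tau, 0 <= tau -> phi (bs_add x (bs_scal tau v)) <= phi x + tau * s) -> 0 <= t -> 0 < l < 1 ->
  phi (bs_add y (bs_scal t v)) <=
    l * phi x + t * s + (1 - l) * phi (bs_add y (bs_scal (l / (1 - l)) (bs_sub y x))).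
Proof.
  intros Hx Ht Hl.
  pose proof (phi_convex (bs_add x (bs_scal (t / l) v))
                (bs_add y (bs_scal (l / (1 - l)) (bs_sub y x))) l ltac:(lra)) as H.
  replace (bs_add (bs_scal l (bs_add x (bs_scal (t / l) v)))
             (bs_scal (1 - l) (bs_add y (bs_scal (l / (1 - l)) (bs_sub y x)))))
    with (bs_add y (bs_scal t v)) in H by (vec (x :: y :: v :: nil); field; lra).
  pose proof (Hx (t / l) ltac:(apply Rdiv_le_0_compat; lra)) as Hfar.
  apply (Rmult_le_compat_l l) in Hfar; [|lra].
  replace (l * (phi x + t / l * s)) with (l * phi x + t * s) in Hfar by (field; lra).
  lra.
Qed.

Lemma recession_transfer x v s :
  (forall tau, 0 <= tau -> phi (bs_add x (bs_scal tau v)) <= phi x + tau * s) ->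
  forall y t, 0 <= t -> phi (bs_add y (bs_scal t v)) <= phi y + t * s.
Proof.
  intros Hx y t Ht. apply le_epsilon. intros eps Heps.
  destruct (continuous_along y (bs_sub y x) (eps / 2) ltac:(lra)) as [c0 [Hc0 Hnear]].
  pose proof (Rle_abs (phi x - phi y)). set (Dv := Rabs (phi x - phi y)) in *.
  assert (HDv : 0 <= Dv) by apply Rabs_pos.
  set (l := Rmin (1/2) (Rmin (c0 / 2) (eps / 2 / (1 + Dv)))).
  assert (Hl1 : l <= 1/2) by apply Rmin_l.
  assert (Hl2 : l <= c0 / 2) by (eapply Rle_trans; [apply Rmin_r|apply Rmin_l]).
  assert (Hl3 : l <= eps / 2 / (1 + Dv)) by (eapply Rle_trans; [apply Rmin_r|apply Rmin_r]).
  assert (Hl0 : 0 < l) by (unfold l; repeat apply Rmin_glb_lt; try lra; apply Rdiv_lt_0_compat; lra).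
  pose proof (recession_chord x v y s t l Hx Ht ltac:(lra)) as Hchord.
  assert (Hc : 0 <= l / (1 - l) <= c0).
  { split; [apply Rdiv_le_0_compat; lra|].
    apply (Rmult_le_reg_r (1 - l)); [lra|].
    replace (l / (1 - l) * (1 - l)) with l by (field; lra). nra. }
  pose proof (Hnear _ Hc) as HA.
  assert (l * Dv <= eps / 2).
  { apply (Rmult_le_compat_r (1 + Dv)) in Hl3; [|lra].
    replace (eps / 2 / (1 + Dv) * (1 + Dv)) with (eps / 2) in Hl3 by (field; lra). lra. }
  assert (l * (phi x - phi y) <= l * Dv) by (apply Rmult_le_compat_l; lra).
  apply Rlt_le, (Rmult_le_compat_l (1 - l)) in HA; [|lra].
  nra.
Qed.

Lemma ray_affine_of_dense (d : nat -> X) v s :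
  (forall (x : X) eps, eps > 0 -> exists n, bs_norm (bs_sub x (d n)) < eps) ->
  (forall m t, 0 <= t -> phi (bs_add (d m) (bs_scal t v)) = phi (d m) + t * s) ->
  forall y t, 0 <= t -> phi (bs_add y (bs_scal t v)) = phi y + t * s.
Proof.
  intros Hd Hm y t Ht.
  set (g := phi (bs_add y (bs_scal t v)) - (phi y + t * s)).
  assert (Hsmall : forall eps, eps > 0 -> Rabs g < 2 * eps).
  { intros eps Heps.
    destruct (phi_cont y eps Heps) as [d1 [Hd1 H1]].
    destruct (phi_cont (bs_add y (bs_scal t v)) eps Heps) as [d2 [Hd2 H2]].
    destruct (Hd y (Rmin d1 d2) ltac:(apply Rmin_glb_lt; lra)) as [m Hmn].
    rewrite bs_norm_subC in Hmn.
    assert (bs_norm (bs_sub (d m) y) < d1) by (pose proof (Rmin_l d1 d2); lra).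
    assert (bs_norm (bs_sub (bs_add (d m) (bs_scal t v)) (bs_add y (bs_scal t v))) < d2).
    { replace (bs_sub (bs_add (d m) (bs_scal t v)) (bs_add y (bs_scal t v))) with (bs_sub (d m) y)
        by (vec (d m :: y :: v :: nil); ring). pose proof (Rmin_r d1 d2); lra. }
    apply H1, Rabs_def2 in H. apply H2 in H0. rewrite Hm in H0 by auto.
    apply Rabs_def2 in H0. apply Rabs_def1; unfold g; lra. }
  destruct (Req_dec g 0) as [E|E]; [unfold g in E; lra|].
  pose proof (Rabs_pos_lt g E). specialize (Hsmall (Rabs g / 2) ltac:(lra)). lra.
Qed.

End Recession.

Lemma slope_eq0_of_bounded_below {X : BanachSpace} (phi : X -> R) (a : R) x v s :
  (forall z, a <= phi z) -> (forall t, phi (bs_add x (bs_scal t v)) = phi x + t * s) -> s = 0.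
Proof.
  intros Hlow Hline. destruct (Req_dec s 0) as [E|E]; auto. exfalso.
  pose proof (Hline ((a - phi x - 1) / s)). pose proof (Hlow (bs_add x (bs_scal ((a - phi x - 1) / s) v))).
  replace ((a - phi x - 1) / s * s) with (a - phi x - 1) in H by (field; auto). lra.
Qed.
Section Coercivity.
Context {X : BanachSpace}.
Variables (phi : X -> R) (d : nat -> X) (f : nat -> X -> R).
Hypotheses (d_dense : forall (x : X) eps, eps > 0 -> exists n, bs_norm (bs_sub x (d n)) < eps)
  (phi_convex : convex_fun phi) (phi_cont : continuous_on_X phi)
  (f_linear : forall m, linear_functional (f m)) (f_subgrad : forall m, subgradient phi (d m) (f m)).

Lemma line_affine_of_recession v s :
  (forall m, f m v = s) ->
  (forall y t, 0 <= t -> phi (bs_add y (bs_scal t v)) <= phi y + t * s) ->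
  forall x t, phi (bs_add x (bs_scal t v)) = phi x + t * s.
Proof.
  intros Hfv Hrec.
  assert (Hdense_rays : forall m t, 0 <= t -> phi (bs_add (d m) (bs_scal t v)) = phi (d m) + t * s).
  { intros m t Ht. apply Rle_antisym; auto.
    pose proof (f_subgrad m (bs_scal t v)). rewrite (proj2 (f_linear m)), Hfv in H. lra. }
  pose proof (ray_affine_of_dense phi phi_cont d v s d_dense Hdense_rays) as Hrays.
  intros x t. destruct (Rle_or_lt 0 t) as [Ht|Ht]; auto.
  pose proof (Hrays (bs_add x (bs_scal t v)) (- t) ltac:(lra)) as H.
  replace (bs_add (bs_add x (bs_scal t v)) (bs_scal (- t) v)) with x in H
    by (vec (x :: v :: nil); ring).
  lra.
Qed.

Lemma coercive_of_mean_subgradients (a : R) (xi : X -> R) :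
  (forall z, a <= phi z) -> not_constant_on_lines phi -> linear_functional xi ->
  (forall v s, (forall m, f m v <= s) -> xi v = s -> forall m, f m v = s) ->
  forall x v, v <> bs_zero ->
    tends_to_infty (fun t => phi (bs_add x (bs_scal t v)) - xi (bs_add x (bs_scal t v))).
Proof.
  intros Hlow Hnc Hxi Hmean x v Hv. set (s := xi v).
  destruct (classic (tends_to_infty
    (fun t => phi (bs_add x (bs_scal t v)) - xi (bs_add x (bs_scal t v))))) as [T|NT]; auto.
  exfalso.
  assert (Hray : forall tau, 0 <= tau -> phi (bs_add x (bs_scal tau v)) <= phi x + tau * s).
  { intros tau Htau. destruct (Rle_lt_or_eq_dec 0 tau Htau) as [Hpos|<-].
    - destruct (Rle_or_lt (phi (bs_add x (bs_scal tau v)) - xi (bs_add x (bs_scal tau v)))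
                          (phi (bs_add x (bs_scal 0 v)) - xi (bs_add x (bs_scal 0 v)))) as [H|H].
      + destruct Hxi as [Hadd Hhom]. rewrite !Hadd, !Hhom, bs_scal0l, bs_add0 in H.
        unfold s. lra.
      + exfalso. apply NT. apply (convex_real_tends_to_infty _ 0 tau); auto.
        apply convex_real_line; auto.
    - rewrite bs_scal0l, bs_add0. lra. }
  pose proof (recession_transfer phi phi_convex phi_cont x v s Hray) as Hrec.
  assert (Hfv : forall m, f m v = s).
  { apply Hmean; auto. intros m.
    pose proof (f_subgrad m v). pose proof (Hrec (d m) 1 ltac:(lra)).
    rewrite bs_scal1 in H0. lra. }
  pose proof (line_affine_of_recession v s Hfv Hrec x) as Hline.
  pose proof (slope_eq0_of_bounded_below phi a x v s Hlow Hline) as Hs0.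
  apply Hnc. exists x, v. split; auto. intros t1 t2. rewrite !Hline, Hs0. ring.
Qed.

End Coercivity.

Theorem mainTheorem7 (X : BanachSpace) (a : R) (phi : X -> R) :
  separable X ->
  (forall x : X, a <= phi x) ->
  continuous_on_X phi ->
  convex_fun phi ->
  not_constant_on_lines phi ->
  essentially_directionally_coercive phi.
Proof.
  intros [d Hd] Hlow Hcont Hconv Hnc.
  destruct (choice (fun m xi => bounded_linear xi /\ subgradient phi (d m) xi)) as [f Hf].
  { intros m. apply (subgradient_exists d); auto. }
  destruct (mean_functional f (fun m => proj1 (Hf m))) as [xi [Hxi Hmean]].
  exists xi. split; [apply in_dual_bounded_linear; auto|].
  apply (coercive_of_mean_subgradients phi d f Hd Hconv Hcont
           (fun m => proj1 (proj1 (Hf m))) (fun m => proj2 (Hf m)) a xi Hlow Hnc (proj1 Hxi) Hmean).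
Qed.
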